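(* Let $p$ be an odd prime, $e\geq 2$, and $N$ cyclic of order $p^e$. Every transitive subgroup of $\mathrm{Hol}(N)$ has an element of order $p^e$.
   Context: $\mathrm{Hol}(N)=N\rtimes\mathrm{Aut}(N)$ acts on $N$ by $(\eta,\alpha)\cdot x=\eta\,\alpha(x)$; a subgroup is transitive if it acts transitively on $N$. *)

From mathcomp Require Import all_boot all_fingroup.
Set Implicit Arguments.
Unset Strict Implicit.
Unset Printing Implicit Defensive.

(* The holomorph Hol(N) = N ⋊ Aut(N) of a finite group N, where N is the whole
   carrier [set: gT], realized as its (faithful) image in Sym(N): the
   permutations x |-> eta * alpha x with eta in N and alpha in Aut(N). *)
Definition Hol (gT : finGroupType) : {set {perm gT}} :=
  [set s : {perm gT} | [exists eta : gT, exists a in Aut [set: gT],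
                          [forall x : gT, s x == (eta * a x)%g]]].

(* Since |N| = p^e, a Sylow p-subgroup P of a transitive G <= Hol(N) is still
   transitive, so with N = <z> some s in P maps 1 to z; such an s is the affine
   map x |-> z x^m. Iterating gives s^n(x) = z^(1 + m + ... + m^(n-1)) x^(m^n).
   As s is a p-element, Fermat forces m = 1 + pt, and for odd p the geometric
   sum 1 + m + ... + m^(p^j - 1) has p-adic valuation exactly j (lifting the
   exponent), so s^(p^e) = 1 while s^(p^(e-1)) moves 1: s has order p^e. *)

From mathcomp Require Import all_boot all_fingroup all_solvable.
From mathcomp Require Import ring.

Set Implicit Arguments.
Unset Strict Implicit.
Unset Printing Implicit Defensive.

Fixpoint geosum (m n : nat) : nat := if n is n'.+1 then 1 + m * geosum m n' else 0.

Lemma geosumD m a b : geosum m (a + b) = geosum m a + m ^ a * geosum m b.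
Proof.
elim: a => [|a IHa]; first by rewrite add0n expn0 mul1n.
by rewrite addSn /= IHa expnS; ring.
Qed.

Lemma geosumM m a b : geosum m (a * b) = geosum m a * geosum (m ^ a) b.
Proof.
elim: b => [|b IHb]; first by rewrite muln0 /= muln0.
by rewrite mulnS geosumD IHb /=; ring.
Qed.

Lemma expn_geosum d n : (1 + d) ^ n = 1 + d * geosum (1 + d) n.
Proof.
elim: n => [|n IHn]; first by rewrite expn0 /= muln0.
by rewrite expnS IHn /=; ring.
Qed.

Lemma geosum_binomial d n : exists q, geosum (1 + d) n = n + d * 'C(n, 2) + d ^ 2 * q.
Proof.
elim: n => [|n [q IHn]]; first by exists 0; rewrite /= !muln0.
by exists (q + 'C(n, 2) + d * q); rewrite /= IHn binS bin1; ring.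
Qed.

Section OneModP.
Variable p : nat.
Hypotheses (p_pr : prime p) (p_odd : odd p).

Lemma geosum_1modp_prime t : exists w, geosum (1 + p * t) p = p * (1 + p * w).
Proof.
have [q ->] := geosum_binomial (p * t) p.
have p_gt2 : 2 < p by rewrite odd_prime_gt2.
have /dvdnP[c ->] : p %| 'C(p, 2) by rewrite prime_dvd_bin // p_gt2 ltnW.
by exists (t * c + t ^ 2 * q); ring.
Qed.

Lemma geosum_1modp_pexp t j :
  exists u, geosum (1 + p * t) (p ^ j) = p ^ j * (1 + p * u).
Proof.
elim: j => [|j [u IHj]]; first by exists 0; rewrite expn0 /= !muln0.
rewrite expnSr geosumM expn_geosum IHj.
have -> : p * t * (p ^ j * (1 + p * u)) = p * (t * (p ^ j * (1 + p * u))) by ring.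
have [w ->] := geosum_1modp_prime (t * (p ^ j * (1 + p * u))).
by exists (u + w + p * u * w); ring.
Qed.

End OneModP.

Lemma fermat_little_pexp p m k : prime p -> m ^ (p ^ k) = m %[mod p].
Proof.
move=> p_pr; elim: k => [|k IHk]; first by rewrite expn0 expn1.
by rewrite expnSr expnM -modnXm IHk modnXm fermat_little.
Qed.

Section GroupTheory.
Local Open Scope group_scope.

Lemma Sylow_atrans (aT : finGroupType) (rT : finType) (to : {action aT &-> rT})
    (p : nat) (G P : {group aT}) (S : {set rT}) :
  [transitive G, on S | to] -> p.-nat #|S| -> p.-Sylow(G) P ->
  [transitive P, on S | to].
Proof.
move=> trG pS sylP; have sPG := pHall_sub sylP.
have [x Sx defS] := imsetP trG.
apply/imsetP; exists x => //; apply/eqP; rewrite eq_sym eqEcard.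
apply/andP; split.
  by apply/subsetP=> _ /imsetP[a Pa ->]; rewrite defS mem_orbit ?(subsetP sPG).
have S_gt0 : 0 < #|S| by case/andP: pS.
have dvd_CP : #|'C_P[x | to]| %| #|'C_G[x | to]|`_p.
  rewrite -(part_pnat_id (pgroupS (subsetIl _ _) (pHall_pgroup sylP))).
  exact/partn_dvd/cardSg/setSI.
rewrite -(leq_pmul2r (cardG_gt0 'C_P[x | to])) card_orbit_stab (card_Hall sylP).
rewrite -(card_orbit_stab to G x) -defS partnM ?cardG_gt0 // (part_pnat_id pS).
by rewrite leq_pmul2l // (dvdn_leq (part_gt0 _ _) dvd_CP).
Qed.

Lemma order_pfactor (gT : finGroupType) (x : gT) p e : prime p -> 0 < e ->
  x ^+ (p ^ e) = 1 -> x ^+ (p ^ e.-1) != 1 -> #[x] = (p ^ e)%N.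
Proof.
move=> p_pr e_gt0 xpe xpe1.
have /(dvdn_pfactor _ _ p_pr)[k le_ke ox] : #[x] %| p ^ e by rewrite order_dvdn xpe.
rewrite ox; congr (p ^ _)%N; apply/eqP; rewrite eqn_leq le_ke leqNgt.
apply: contra xpe1 => lt_ke; rewrite -order_dvdn ox dvdn_exp2l // -ltnS prednK //.
Qed.

Lemma Hol_cyclic (gT : finGroupType) (s : {perm gT}) :
  cyclic [set: gT] -> s \in Hol gT -> exists eta m, forall x, s x = eta * x ^+ m.
Proof.
case/cyclicP=> z gen_z /[!inE] /existsP[eta /existsP[a /andP[autA /forallP sE]]].
have [m az] : exists m, a z = z ^+ m by apply/cycleP; rewrite -gen_z inE.
exists eta, m => x; rewrite (eqP (sE x)); congr (_ * _).
have /cycleP[i ->] : x \in <[z]> by rewrite -gen_z inE.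
have aX : a (z ^+ i) = a z ^+ i by rewrite -(autmE autA) morphX ?inE.
by rewrite aX az -!expgM mulnC.
Qed.

Section AffineMaps.
Variables (gT : finGroupType) (z : gT) (m : nat) (s : {perm gT}).
Hypothesis gen_z : [set: gT] = <[z]>.
Hypothesis sE : forall x, s x = z * x ^+ m.

Lemma affine_expgE n x : (s ^+ n) x = z ^+ geosum m n * x ^+ (m ^ n).
Proof.
have cTT : abelian [set: gT] by rewrite gen_z cycle_abelian.
elim: n x => [|n IHn] x; first by rewrite expg0 perm1 mul1g expg1.
rewrite expgSr permM IHn sE expgMn; last by apply: (centsP cTT); rewrite inE.
by rewrite -!expgM mulgA -expgS /= mulnC expnSr.
Qed.

Variables (p e : nat).
Hypotheses (p_pr : prime p) (e_gt0 : 0 < e) (oz : #[z] = (p ^ e)%N).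

Lemma affine_p_elt_1modp : p.-elt s -> m = 1 %[mod p].
Proof.
case/p_natP=> k ok.
have sk1 : s ^+ #[s] = 1 by apply: expg_order.
have : (s ^+ #[s]) z = z by rewrite sk1 perm1.
have : (s ^+ #[s]) 1 = 1 by rewrite sk1 perm1.
rewrite !affine_expgE expg1n mulg1 => -> /eqP; rewrite mul1g -{2}[z]expg1.
rewrite eq_expg_mod_order oz ok => /eqP/(congr1 (modn^~ p)).
by rewrite !modn_dvdm ?dvdn_exp // fermat_little_pexp.
Qed.

Hypothesis p_odd : odd p.

Lemma affine_order : m = 1 %[mod p] -> #[s] = (p ^ e)%N.
Proof.
move=> m_1modp.
have [t mE] : exists t, m = 1 + p * t.
  exists (m %/ p); rewrite {1}(divn_eq m p) m_1modp modn_small ?prime_gt1 //.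
  by rewrite addnC mulnC.
have expT (x : gT) : x ^+ (p ^ e) = 1.
  by apply/eqP; rewrite -order_dvdn -oz; apply: order_dvdG; rewrite /= -gen_z inE.
have [u uE] := geosum_1modp_pexp p_pr p_odd t e.
have [v vE] := geosum_1modp_pexp p_pr p_odd t e.-1.
apply: order_pfactor e_gt0 _ _ => //.
  apply/permP => x; rewrite affine_expgE perm1 mE uE expn_geosum uE.
  by rewrite expgM expT expg1n mul1g mulnCA expgD expg1 expgM expT expg1n mulg1.
apply/eqP => /(congr1 (fun r : {perm gT} => r 1)).
rewrite affine_expgE perm1 expg1n mulg1 mE vE => /eqP.
rewrite -order_dvdn oz -{1}(prednK e_gt0) expnSr dvdn_pmul2l ?expn_gt0 ?prime_gt0 //.
by rewrite dvdn_addl ?dvdn_mulr // dvdn1 gtn_eqF ?prime_gt1.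
Qed.

End AffineMaps.

End GroupTheory.

Theorem lemma4p1 (p e : nat) (gT : finGroupType) (G : {group {perm gT}}) :
  prime p -> odd p -> 2 <= e ->
  cyclic [set: gT] -> #|[set: gT]| = p ^ e ->
  G \subset Hol gT ->
  [transitive G, on [set: gT] | 'P] ->
  exists2 g, g \in G & #[g]%g = p ^ e.
Proof.
move=> p_pr p_odd e_ge2 cycT cardT sGH trG.
have e_gt0 : 0 < e by apply: leq_trans e_ge2.
have [z gen_z] := cyclicP cycT.
have oz : #[z]%g = p ^ e by rewrite -cardT gen_z.
have [P sylP] := Sylow_exists p G; have sPG := pHall_sub sylP.
have trP : [transitive P, on [set: gT] | 'P].
  by apply: Sylow_atrans trG _ sylP; rewrite cardT pnatX pnat_id.
have /orbitP[s Ps /= sz] : z \in orbit 'P P 1%g by rewrite (atransP trP) ?inE.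
have [eta [m sE]] := Hol_cyclic cycT (subsetP sGH s (subsetP sPG s Ps)).
have eta_z : eta = z by rewrite -sz apermE sE expg1n mulg1.
rewrite {}eta_z in sE; exists s; first exact: (subsetP sPG).
have s_pelt := mem_p_elt (pHall_pgroup sylP) Ps.
have m_1modp := affine_p_elt_1modp gen_z sE p_pr e_gt0 oz s_pelt.
exact (affine_order gen_z sE p_pr e_gt0 oz p_odd m_1modp).
Qed.
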